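(* For every feasible set of jobs, the online policy Thrashing completes every job $j$ with interval stretch $s_j=(C_j-r_j)/(d_j-r_j)\le 4$.
   Context: Jobs $j$ have release time $r_j$, due date $d_j>r_j$, work $w_j>0$, and linear speed function $f_j(t)=m_j(t-r_j)$ with $m_j>0$. A single processor runs at most one job at a time, preemption is allowed, and running job $j$ during a set of times $S$ completes $\int_S f_j(t)\,dt$ units of its work; $C_j$ denotes the completion time of job $j$. A set of jobs is feasible if some schedule runs each job only within $[r_j,d_j]$ and completes it by $d_j$. Online: job $j$ becomes known only at time $r_j$. The policy Thrashing: at each time $t$, consider the released unfinished jobs $j$ whose current stretch $(t-r_j)/(d_j-r_j)$ is at least $2$; if there is none, the processor idles, otherwise it runs the one among them with the latest release time (ties broken arbitrarily). *)

From HB Require Import structures.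
From mathcomp Require Import all_boot all_order all_algebra.
From mathcomp Require Import all_classical all_reals all_analysis.
Set Implicit Arguments. Unset Strict Implicit. Unset Printing Implicit Defensive.
Import Order.TTheory GRing.Theory Num.Theory.
Local Open Scope classical_set_scope.
Local Open Scope ring_scope.

(* A (single-processor, preemptive) schedule for a finite job set J is a map
   sigma : R -> option J; sigma t = Some j means job j runs at time t,
   sigma t = None means the processor idles.  At most one job runs at a time
   by construction. *)

Definition runs {R : realType} {J : finType} (sigma : R -> option J) (j : J)
  : set R := [set t | sigma t = Some j].

Definition measurable_schedule {R : realType} {J : finType}
  (sigma : R -> option J) : Prop :=
  forall j : J, measurable (runs sigma j).

Definition work {R : realType} {J : finType} (r m : J -> R)
  (sigma : R -> option J) (j : J) (t : R) : \bar R :=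
  (\int[lebesgue_measure]_(s in runs sigma j `&` `[r j, t]%classic)
      (m j * (s - r j))%:E)%E.

Definition feasible {R : realType} {J : finType} (r d w m : J -> R) : Prop :=
  exists sigma : R -> option J,
    measurable_schedule sigma /\
    (forall j t, sigma t = Some j -> r j <= t <= d j) /\
    (forall j, ((w j)%:E <= work r m sigma j (d j))%E).

Definition thrash_candidate {R : realType} {J : finType} (r d w m : J -> R)
  (sigma : R -> option J) (j : J) (t : R) : Prop :=
  r j <= t /\ (work r m sigma j t < (w j)%:E)%E /\
  2 <= (t - r j) / (d j - r j).

(* sigma is a schedule produced by the policy Thrashing (with some arbitrary
   tie-breaking): at each time t it idles iff there is no candidate, and
   otherwise runs a candidate with the latest release time. *)
Definition thrashing_schedule {R : realType} {J : finType} (r d w m : J -> R)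
  (sigma : R -> option J) : Prop :=
  measurable_schedule sigma /\
  forall t : R,
    match sigma t with
    | None => forall k, ~ thrash_candidate r d w m sigma k t
    | Some j => thrash_candidate r d w m sigma j t /\
                forall k, thrash_candidate r d w m sigma k t -> r k <= r j
    end.

From HB Require Import structures.
From mathcomp Require Import all_boot all_order all_algebra.
From mathcomp Require Import all_classical all_reals all_analysis.
From mathcomp Require Import measurable_realfun lra.
Import Order.TTheory GRing.Theory Num.Theory.
Local Open Scope classical_set_scope.
Local Open Scope ring_scope.

(* Write p_j = d_j - r_j.  If job j were still unfinished at r_j + 4 p_j, it
   would be a Thrashing candidate throughout [r_j + 2 p_j, r_j + 4 p_j], so
   Thrashing is busy there, running only jobs k with r_j <= r_k and
   d_k <= r_j + 4 p_j.  Whenever Thrashing runs k the speed of k is at least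
   2 m_k p_k, so it spends at most half the time w_k / (m_k p_k) that a
   feasible schedule must spend on k inside [r_k, d_k], and strictly less for
   k = j.  These windows lie in [r_j, r_j + 4 p_j], so the busy time 2 p_j is
   less than half of 4 p_j, a contradiction.  The completion time is then the
   supremum of the times at which j is unfinished, as processed work is
   monotone and grows continuously. *)

Section measure_facts.
Context {d : measure_display} {T : measurableType d} {R : realType}.
Variable mu : {measure set T -> \bar R}.

Lemma integral_ge_cstM {D : set T} {f : T -> \bar R} (c : R) :
  measurable D -> measurable_fun D f -> 0 <= c ->
  (forall x, D x -> c%:E <= f x)%E ->
  (c%:E * mu D <= \int[mu]_(x in D) f x)%E.
Proof.
move=> mD mf c0 cf; rewrite -integral_cst //.
exact: ge0_le_integral.
Qed.

Lemma integral_le_cstM {D : set T} {f : T -> \bar R} (c : R) :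
  measurable D -> measurable_fun D f ->
  (forall x, D x -> 0 <= f x <= c%:E)%E ->
  (\int[mu]_(x in D) f x <= c%:E * mu D)%E.
Proof.
move=> mD mf cf; rewrite -integral_cst //.
by apply: ge0_le_integral => // x /cf /andP[].
Qed.

Lemma measure_bigsetU_seq {I : choiceType} (s : seq I) (P : pred I)
    (F : I -> set T) :
  uniq s -> (forall k, measurable (F k)) -> trivIset setT F ->
  mu (\big[setU/set0]_(k <- s | P k) F k) = (\sum_(k <- s | P k) mu (F k))%E.
Proof.
move=> + mF tF; elim: s => [|y s IH]; first by rewrite !big_nil measure0.
rewrite /= => /andP[ys us]; rewrite !big_cons; case: ifP => _; last exact: IH.
rewrite measureU //; first by congr (_ + _)%E; exact: IH.
  exact: bigsetU_measurable.
apply/seteqP; split => // x [Fyx]; rewrite -bigcup_seq_cond => -[k /andP[ks _] Fkx].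
suff yk : y = k by move: ys; rewrite yk ks.
by apply: tF => //; exists x.
Qed.

End measure_facts.

Section lebesgue_facts.
Context {R : realType}.
Notation mu := (@lebesgue_measure R).

Lemma lebesgue_measure_itv_le {a b : R} (b0 b1 : bool) : a <= b ->
  mu [set` Interval (BSide b0 a) (BSide b1 b)] = (b - a)%:E.
Proof.
move=> ab; rewrite lebesgue_measure_itv /= lte_fin.
by case: ltgtP ab => // -> _; rewrite subrr.
Qed.

Lemma measure_sub_itv_fin_num {A : set R} {a b : R} :
  measurable A -> A `<=` `[a, b] -> mu A \is a fin_num.
Proof.
move=> mA Aab; rewrite ge0_fin_numE //.
apply: (le_lt_trans (le_measure mu (mem_set mA) (mem_set (measurable_itv _)) Aab)).
by rewrite /= lebesgue_measure_itv; case: ifP => _; rewrite ?ltry // -EFinB ltry.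
Qed.

Lemma itv_cc_splitU (a : R) {s t : R} : s <= t ->
  `[a, t]%classic = `[a, s] `|` (`[a, t] `&` `]s, +oo[).
Proof.
move=> st; apply/seteqP; split => y; rewrite /= !in_itv /= ?andbT.
  by move=> /andP[ay yt]; have [ys|sy] := leP y s; [left|right]; rewrite ?ay ?ys ?yt.
by move=> [/andP[-> /le_trans->]|[]].
Qed.

(* Choose t in A close to sup A: the part of A beyond t lies in ]t, sup A],
   which is short. *)
Lemma lebesgue_measure_le_prefix {A : set R} {a b c : R} :
  measurable A -> A `<=` `[a, b] -> 0 <= c ->
  (forall t, A t -> mu (A `&` `]-oo, t]) <= c%:E)%E -> (mu A <= c%:E)%E.
Proof.
move=> mA Aab c0 Ac.
have [->|/set0P[x Ax]] := eqVneq A set0; first by rewrite measure0 lee_fin.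
have supA : has_sup A.
  by split; [exists x|exists b => y /Aab; rewrite /= in_itv => /andP[]].
rewrite -(fineK (measure_sub_itv_fin_num mA Aab)) lee_fin leNgt.
apply/negP => c_lt; have e_gt0 : 0 < fine (mu A) - c by rewrite subr_gt0.
have [t At t_close] := sup_adherent e_gt0 supA.
have t_sup : t <= sup A by exact: sup_upper_bound.
have mAt : measurable (A `&` `]-oo, t]) by exact: measurableI.
have A_split : A `<=` (A `&` `]-oo, t]) `|` `]t, sup A].
  move=> y Ay; have [yt|ty] := leP y t; first by left; split; rewrite /= ?in_itv /= ?yt.
  by right; rewrite /= in_itv /= ty; exact: sup_upper_bound.
have mU : measurable ((A `&` `]-oo, t]) `|` `]t, sup A]) by exact: measurableU.
have := le_trans (le_measure mu (mem_set mA) (mem_set mU) A_split)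
  (measureU2 mu mAt (measurable_itv _)).
rewrite /= lebesgue_measure_itv_le // => /le_trans/(_ (leeD (Ac t At) (lexx _))).
rewrite -(fineK (measure_sub_itv_fin_num mA Aab)) -EFinD lee_fin; lra.
Qed.

End lebesgue_facts.

Lemma first_hitting_time {R : realType} {f : R -> \bar R} {x : \bar R} {a b : R} :
  {homo f : s t / s <= t >-> (s <= t)%E} ->
  (forall t, (f t < x)%E -> exists2 e : R, 0 < e & (f (t + e)%R < x)%E) ->
  (f a < x)%E -> (x <= f b)%E ->
  exists C, [/\ C <= b, (x <= f C)%E & forall t, t < C -> (f t < x)%E].
Proof.
move=> f_mono f_open fa xfb; set S := [set t | (f t < x)%E].
have S_ub : ubound S b.
  move=> t St; rewrite leNgt; apply/negP => /ltW/f_mono fbt.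
  by have := lt_le_trans St (le_trans xfb fbt); rewrite ltxx.
have supS : has_sup S by split; [exists a|exists b].
exists (sup S); split; first by apply: ge_sup => //; exists a.
  rewrite leNgt; apply/negP => /f_open[e e_gt0 Se].
  by have := sup_upper_bound supS Se; lra.
move=> t t_lt; have [|s Ss ts] := @sup_adherent _ S (sup S - t) _ supS.
  by rewrite subr_gt0.
by apply: le_lt_trans (f_mono t s _) Ss; lra.
Qed.

Section work.
Context {R : realType} {J : finType} {r m : J -> R} {sigma : R -> option J}.
Hypotheses (sigma_meas : measurable_schedule sigma) (m_ge0 : forall j, 0 <= m j).
Notation mu := (@lebesgue_measure R).
Notation W := (work r m sigma).

Let speed_measurable j (D : set R) :
  measurable_fun D (fun s => (m j * (s - r j))%:E).
Proof.
by apply/measurable_EFinP; apply: measurable_funM => //; exact: measurable_funB.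
Qed.

Let runs_itv_measurable j (a b : R) : measurable (runs sigma j `&` `[a, b]).
Proof. exact: measurableI (sigma_meas j) (measurable_itv _). Qed.

Let speed_ge0 j s : r j <= s -> (0 <= (m j * (s - r j))%:E)%E.
Proof. by move=> rs; rewrite lee_fin mulr_ge0 // subr_ge0. Qed.

Lemma work_ge0 j t : (0 <= W j t)%E.
Proof.
by apply: integral_ge0 => s [_] /andP[/speed_ge0].
Qed.

Let speed_integral_le_work {j t} {D : set R} : measurable D ->
  D `<=` runs sigma j `&` `[r j, t] ->
  (\int[mu]_(s in D) (m j * (s - r j))%:E <= W j t)%E.
Proof.
move=> mD Dsub; apply: ge0_subset_integral => //.
- exact: runs_itv_measurable.
- exact: speed_measurable.
- by move=> s [_] /andP[/speed_ge0].
Qed.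

Lemma le_work j : {homo W j : s t / s <= t >-> (s <= t)%E}.
Proof.
move=> s t st; apply: speed_integral_le_work; first exact: runs_itv_measurable.
move=> x [jx] /andP[rx]; rewrite bnd_simp => xs; split => //.
by apply/andP; split; rewrite // bnd_simp (le_trans xs st).
Qed.

Lemma work_ge_measure j t (D : set R) (c : R) : measurable D ->
  D `<=` runs sigma j `&` `[r j, t] -> 0 <= c ->
  (forall s, D s -> c <= m j * (s - r j)) -> (c%:E * mu D <= W j t)%E.
Proof.
move=> mD Dsub c0 Dc; apply: le_trans _ (speed_integral_le_work mD Dsub).
by apply: integral_ge_cstM => //; exact: speed_measurable.
Qed.

Lemma work_ge_measure_after j (a t : R) : r j <= a ->
  ((m j * (a - r j))%:E * mu (runs sigma j `&` `[a, t]) <= W j t)%E.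
Proof.
move=> ra; apply: work_ge_measure; first exact: runs_itv_measurable.
- move=> s [js /andP[]]; rewrite !bnd_simp => a_s st; split => //.
  by apply/andP; rewrite !bnd_simp (le_trans ra a_s).
- by rewrite mulr_ge0 // subr_ge0.
- move=> s [_ /andP[]]; rewrite bnd_simp => a_s _.
  by rewrite ler_wpM2l // lerB.
Qed.

Lemma work_le_measure j t :
  (W j t <= (m j * (t - r j))%:E * mu (runs sigma j `&` `[r j, t]))%E.
Proof.
apply: integral_le_cstM; [exact: runs_itv_measurable|exact: speed_measurable|].
move=> s [_] /andP[rs]; rewrite bnd_simp => st.
by rewrite speed_ge0 // lee_fin ler_wpM2l // lerB.
Qed.

Lemma work_leD j s t : s <= t ->
  (W j t <= W j s + (m j * `|t - r j| * (t - s))%:E)%E.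
Proof.
move=> st; rewrite /work (itv_cc_splitU (r j) st) setIUr.
set A := runs sigma j `&` `[r j, s].
set B := runs sigma j `&` (`[r j, t] `&` `]s, +oo[).
have mA : measurable A by exact: runs_itv_measurable.
have mB : measurable B by apply: measurableI => //; exact: measurableI.
rewrite ge0_integral_setU //; first last.
- rewrite disj_set2E; apply/eqP/seteqP; split => //.
  move=> y [[_ /andP[_ ys]] [_ [_ /andP[sy _]]]].
  by move: (lt_le_trans sy ys); rewrite ltxx.
- by move=> y [[_ /andP[/speed_ge0]]|[_ [/andP[/speed_ge0]]]].
- exact: speed_measurable.
apply: leeD => //.
apply: le_trans (integral_le_cstM mu (m j * `|t - r j|) mB _ _) _.
- exact: speed_measurable.
- move=> y [_ [/andP[ry yt] _]].
  rewrite speed_ge0 // lee_fin ler_wpM2l //.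
  by rewrite (le_trans _ (ler_norm _)) // lerB.
rewrite [X in (_ <= X)%E]EFinM; apply: lee_wpmul2l; first by rewrite lee_fin mulr_ge0.
have Bst : B `<=` `]s, t] by move=> y [_ [/andP[_ yt] /andP[sy _]]]; apply/andP.
apply: le_trans (le_measure mu (mem_set mB) (mem_set (measurable_itv _)) Bst) _.
by rewrite /= lebesgue_measure_itv_le.
Qed.

Lemma work_eq0 j t : t < r j -> W j t = 0%E.
Proof.
move=> tr; rewrite /work set_itv_ge ?bnd_simp -?ltNge //.
by rewrite (_ : _ `&` set0 = set0) ?integral_set0 //; exact: setI0.
Qed.

(* Processed work grows at most linearly just after t, so the set of times at
   which a job is unfinished is open to the right. *)
Lemma work_lt_right j (x t : R) : (W j t < x%:E)%E ->
  exists2 e, 0 < e & (W j (t + e)%R < x%:E)%E.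
Proof.
move=> Wt; have Wfin : W j t \is a fin_num.
  by rewrite ge0_fin_numE ?work_ge0 // (lt_le_trans Wt) ?leey.
move: Wt; rewrite -(fineK Wfin) lte_fin; set g := fine (W j t) => gx.
set M := m j * (`|t - r j| + 1) + 1.
have M_gt0 : 0 < M by rewrite ltr_pwDr // mulr_ge0 // addr_ge0.
set e := Num.min 1 ((x - g) / M).
have e_gt0 : 0 < e by rewrite lt_min ltr01 divr_gt0 // subr_gt0.
have e_le1 : e <= 1 by rewrite ge_min lexx.
have eM : e * M <= x - g by rewrite -ler_pdivlMr // ge_min lexx orbT.
have te : t <= t + e by lra.
exists e => //; apply: le_lt_trans (work_leD j _ _ te) _.
rewrite -(fineK Wfin) -EFinD lte_fin -/g (addrC t) addrK.
have : m j * `|e + t - r j| <= m j * (`|t - r j| + 1).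
  rewrite ler_wpM2l // -addrA; apply: le_trans (ler_normD _ _) _.
  by rewrite [leRHS]addrC lerD2r ger0_norm // ltW.
rewrite /M in eM; nra.
Qed.

End work.

Section schedule.
Context {R : realType} {J : finType} {tau : R -> option J}.
Notation mu := (@lebesgue_measure R).

Lemma trivIset_runsI (G : J -> set R) :
  trivIset setT (fun k => runs tau k `&` G k).
Proof. by move=> k l _ _ [t [[+ _] [+ _]]]; rewrite /runs /= => -> []. Qed.

Lemma measure_runs_itv_fin_num k (a b : R) : measurable_schedule tau ->
  mu (runs tau k `&` `[a, b]) \is a fin_num.
Proof.
move=> tau_meas; apply: measure_sub_itv_fin_num (@subIsetr _ _ _).
exact: measurableI (tau_meas k) (measurable_itv _).
Qed.

Lemma sum_measure_runs_le (P : pred J) (lo hi : J -> R) (a b : R) :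
  measurable_schedule tau -> a <= b ->
  (forall k, P k -> a <= lo k /\ hi k <= b) ->
  (\sum_(k | P k) mu (runs tau k `&` `[lo k, hi k]) <= (b - a)%:E)%E.
Proof.
move=> tau_meas ab Pab.
have mF k : measurable (runs tau k `&` `[lo k, hi k]) by exact: measurableI.
rewrite -measure_bigsetU_seq ?index_enum_uniq //; last exact: trivIset_runsI.
rewrite -(lebesgue_measure_itv_le true false ab).
apply: le_measure; rewrite ?inE //.
  by apply: bigsetU_measurable => k _; exact: mF.
rewrite -bigcup_seq_cond => t [k /andP[_ Pk] [_ /andP[]]].
rewrite !bnd_simp => kt tk; have [ak kb] := Pab k Pk.
by apply/andP; rewrite !bnd_simp (le_trans ak kt) (le_trans tk kb).
Qed.

End schedule.

Section thrashing.
Context {R : realType} {J : finType} {r d w m : J -> R}.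
Hypotheses (rd : forall j, r j < d j) (w_gt0 : forall j, 0 < w j)
  (m_gt0 : forall j, 0 < m j).
Context {sigma : R -> option J}.
Hypothesis sigma_thr : thrashing_schedule r d w m sigma.
Notation mu := (@lebesgue_measure R).
Notation W := (work r m sigma).

Let sigma_meas : measurable_schedule sigma := sigma_thr.1.
Let m_ge0 j : 0 <= m j := ltW (m_gt0 j).

Lemma thrash_candidate_late {k t} : thrash_candidate r d w m sigma k t ->
  r k + 2 * (d k - r k) <= t.
Proof. by move=> [_ [_]]; rewrite ler_pdivlMr ?subr_gt0 //; lra. Qed.

Lemma thrashing_runs_candidate {k t} : sigma t = Some k ->
  thrash_candidate r d w m sigma k t.
Proof. by move=> sk; have := sigma_thr.2 t; rewrite sk => -[]. Qed.

Lemma thrashing_busy {j t} : thrash_candidate r d w m sigma j t ->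
  exists k, [/\ sigma t = Some k, r j <= r k & d k <= t].
Proof.
move=> jt; have := sigma_thr.2 t; case: (sigma t) => [k [kt latest]|/(_ j)//].
exists k; split => //; first exact: latest.
by have := thrash_candidate_late kt; have := rd k; lra.
Qed.

(* Whenever Thrashing runs k, k is unfinished and its speed is at least
   2 m_k (d_k - r_k). *)
Lemma thrashing_runs_measure k (a b : R) :
  ((2 * m k * (d k - r k))%:E * mu (runs sigma k `&` `[a, b]) <= (w k)%:E)%E.
Proof.
set A := runs sigma k `&` `[a, b]; set c := 2 * m k * (d k - r k).
have c_gt0 : 0 < c by rewrite !mulr_gt0 // subr_gt0.
have mA : measurable A by exact: measurableI.
rewrite -lee_pdivlMl // muleC -EFinM.
apply: (lebesgue_measure_le_prefix (a := a) (b := b) mA).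
- by move=> s [].
- by rewrite divr_ge0 // ltW.
move=> t [kt _]; have [kt_le [kt_unfinished _]] := thrashing_runs_candidate kt.
rewrite mulrC EFinM lee_pdivlMl //; apply: ltW; apply: le_lt_trans kt_unfinished.
apply: work_ge_measure => //.
- exact: measurableI.
- move=> s [[ks _] /andP[_]]; rewrite bnd_simp => st; split => //.
  have := thrash_candidate_late (thrashing_runs_candidate ks); have := rd k.
  by rewrite /= in_itv /= => *; apply/andP; split; lra.
- exact: ltW.
- move=> s [[ks _] _]; have := thrash_candidate_late (thrashing_runs_candidate ks).
  by rewrite /c -mulrA mulrCA ler_pM2l //; lra.
Qed.

Lemma thrashing_busy_measure j (a T : R) : r j + 2 * (d j - r j) <= a ->
  a <= T -> (W j T < (w j)%:E)%E ->
  ((T - a)%:E <=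
   \sum_(k | (r j <= r k)%R && (d k <= T)%R) mu (runs sigma k `&` `[a, T]))%E.
Proof.
move=> late aT unfinished.
have mF k : measurable (runs sigma k `&` `[a, T]) by exact: measurableI.
rewrite -(lebesgue_measure_itv_le true false aT) -measure_bigsetU_seq //; first last.
- exact: trivIset_runsI.
- exact: index_enum_uniq.
apply: le_measure; rewrite ?inE //.
  by apply: bigsetU_measurable => k _; exact: mF.
move=> t /andP[]; rewrite !bnd_simp => a_t tT.
have jt : thrash_candidate r d w m sigma j t.
  split; first by have := rd j; lra.
  split; first exact: le_lt_trans (le_work sigma_meas m_ge0 j _ _ tT) unfinished.
  by rewrite ler_pdivlMr ?subr_gt0 //; lra.
have [k [sk jk kt]] := thrashing_busy jt.
rewrite -bigcup_seq_cond; exists k.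
  by rewrite /= mem_index_enum jk (le_trans kt tT).
by split => //; rewrite /= in_itv /= a_t tT.
Qed.

Lemma thrashing_runs_le_half_feasible k (a b : R) (tau : R -> option J) :
  measurable_schedule tau -> ((w k)%:E <= work r m tau k (d k))%E ->
  2 * fine (mu (runs sigma k `&` `[a, b])) <=
  fine (mu (runs tau k `&` `[r k, d k])).
Proof.
move=> tau_meas tau_done.
have Aw := thrashing_runs_measure k a b.
have wB := le_trans tau_done (work_le_measure tau_meas m_ge0 k (d k)).
rewrite -(fineK (measure_runs_itv_fin_num k a b sigma_meas)) -EFinM lee_fin in Aw.
rewrite -(fineK (measure_runs_itv_fin_num k (r k) (d k) tau_meas)) -EFinM lee_fin in wB.
have q_gt0 : 0 < m k * (d k - r k) by rewrite mulr_gt0 // subr_gt0.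
by rewrite -(ler_pM2l q_gt0) mulrCA !mulrA (le_trans Aw wB).
Qed.

Lemma thrashing_unfinished_lt_half_feasible j (T : R) (tau : R -> option J) :
  measurable_schedule tau -> ((w j)%:E <= work r m tau j (d j))%E ->
  (W j T < (w j)%:E)%E ->
  2 * fine (mu (runs sigma j `&` `[r j + 2 * (d j - r j), T])) <
  fine (mu (runs tau j `&` `[r j, d j])).
Proof.
move=> tau_meas tau_done unfinished.
have p_gt0 : 0 < d j - r j by rewrite subr_gt0.
have late : r j <= r j + 2 * (d j - r j) by lra.
have := work_ge_measure_after (r := r) sigma_meas m_ge0 j _ T late.
rewrite (addrC (r j)) addrK => /le_lt_trans/(_ unfinished) Aw.
have wB := le_trans tau_done (work_le_measure tau_meas m_ge0 j (d j)).
rewrite -(fineK (measure_runs_itv_fin_num _ _ _ sigma_meas)) -EFinM lte_fin in Aw.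
rewrite -(fineK (measure_runs_itv_fin_num j (r j) (d j) tau_meas)) -EFinM lee_fin in wB.
have q_gt0 : 0 < m j * (d j - r j) by rewrite mulr_gt0.
rewrite mulrCA in Aw.
by rewrite -(ltr_pM2l q_gt0) mulrCA mulrA (lt_le_trans Aw wB).
Qed.

Lemma thrashing_work_done j : feasible r d w m ->
  ((w j)%:E <= W j (r j + 4 * (d j - r j)))%E.
Proof.
move=> [tau [tau_meas [_ tau_done]]].
set p := d j - r j; have p_gt0 : 0 < p by rewrite subr_gt0.
set T0 := r j + 2 * p; set T := r j + 4 * p.
rewrite leNgt; apply/negP => unfinished.
pose P k := (r j <= r k) && (d k <= T).
pose a k := fine (mu (runs sigma k `&` `[T0, T])).
pose b k := fine (mu (runs tau k `&` `[r k, d k])).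
have sum_a : 2 * p <= \sum_(k | P k) a k.
  rewrite -lee_fin -sumEFin.
  under eq_bigr do rewrite /a fineK ?(measure_runs_itv_fin_num _ _ _ sigma_meas) //.
  have -> : 2 * p = T - T0 by rewrite /T /T0; lra.
  by apply: thrashing_busy_measure => //; rewrite /T /T0; lra.
have sum_b : \sum_(k | P k) b k <= 4 * p.
  rewrite -lee_fin -sumEFin.
  under eq_bigr do rewrite /b fineK ?(measure_runs_itv_fin_num _ _ _ tau_meas) //.
  have -> : 4 * p = T - r j by rewrite /T; lra.
  by apply: sum_measure_runs_le => // [|k /andP[]//]; rewrite /T; lra.
have Pj : P j by apply/andP; split => //; rewrite /T /p; have := rd j; lra.
have : 2 * \sum_(k | P k) a k < \sum_(k | P k) b k.
  rewrite mulr_sumr (bigD1 j Pj) [X in _ < X](bigD1 j Pj) /=.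
  apply: ltr_leD; first exact: thrashing_unfinished_lt_half_feasible.
  by apply: ler_sum => k _; exact: thrashing_runs_le_half_feasible.
lra.
Qed.

End thrashing.

Theorem mainTheorem7 (R : realType) (J : finType) (r d w m : J -> R)
  (hrd : forall j, r j < d j) (hw : forall j, 0 < w j) (hm : forall j, 0 < m j)
  (hfeas : feasible r d w m)
  (sigma : R -> option J) (hthr : thrashing_schedule r d w m sigma) :
  forall j : J, exists C : R,
    ((w j)%:E <= work r m sigma j C)%E /\
    (forall t, t < C -> (work r m sigma j t < (w j)%:E)%E) /\
    (C - r j) / (d j - r j) <= 4.
Proof.
move=> j; have sigma_meas := hthr.1; have m_ge0 k : 0 <= m k by exact: ltW.
have unreleased : (work r m sigma j (r j - 1) < (w j)%:E)%E.
  by rewrite work_eq0 ?lte_fin //; lra.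
have [C [C_le C_done C_first]] := first_hitting_time (le_work sigma_meas m_ge0 j)
  (fun t => work_lt_right sigma_meas m_ge0 j (w j) t) unreleased
  (thrashing_work_done hrd hw hm hthr j hfeas).
exists C; do !split => //.
by rewrite ler_pdivrMr ?subr_gt0 //; lra.
Qed.
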